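(* Let $d\geq 2$ and $N\geq1$ be integers and let $A\in\mathbb{Z}_{\geq0}^{N\times d}$ be an $(N,d)$-complete consecutive integers matrix. Then $$a_d(\lfloor\log_d N\rfloor)\leq\beta(A)\leq\gamma(A)\leq a_d(\lceil\log_d N\rceil),$$ where $a_d(k)=d+\sum_{i=0}^{d-1}\sum_{j=1}^{k} i\cdot d^{j-1}$. In particular, underestimating $\beta(A)$ by $a_d(\lfloor\log_d N\rfloor)$ and overestimating $\gamma(A)$ by $a_d(\lceil\log_d N\rceil)$ incurs an additive error of at most $\sum_{i=0}^{d-1} i\cdot d^{\lceil\log_d N\rceil-1}$.
   Context: For $A\in\mathbb{R}^{m\times d}$ and $\Pi=(\pi_1,\dots,\pi_d)\in\mathfrak{S}(m)^d$ (where $\mathfrak{S}(m)$ is the symmetric group on $\{1,\dots,m\}$), $A^\Pi$ denotes the matrix with $A^\Pi_{i,j}=A_{\pi_j^{-1}(i),j}$. Define $\gamma(A)=\min_{\Pi}\max_{i}\sum_{j=1}^d A^\Pi_{i,j}$ and $\beta(A)=\max_{\Pi}\min_{i}\sum_{j=1}^d A^\Pi_{i,j}$. For $d,N\in\mathbb{Z}_{\geq0}$ let $a=(1,\dots,N)^\top$; any matrix $A^\Pi$ obtained from $(a,\dots,a)\in\mathbb{Z}^{N\times d}$ by permutations $\Pi\in\mathfrak{S}(N)^d$ of the columns' entries is called an $(N,d)$-complete consecutive integers matrix. *)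

From mathcomp Require Import all_boot all_order all_algebra all_fingroup.
Set Implicit Arguments. Unset Strict Implicit. Unset Printing Implicit Defensive.

Definition permcols m d (A : 'M[nat]_(m, d)) (Pi : {ffun 'I_d -> {perm 'I_m}})
  : 'M[nat]_(m, d) := \matrix_(i, j) A (((Pi j)^-1)%g i) j.

Definition rowsum m d (A : 'M[nat]_(m, d)) (i : 'I_m) : nat := \sum_(j < d) A i j.

Definition maxrow m d (A : 'M[nat]_(m, d)) : nat := \max_(i < m) rowsum A i.

(* min over rows; the seed maxrow A dominates every row sum, so for m >= 1
   this is the true minimum *)
Definition minrow m d (A : 'M[nat]_(m, d)) : nat :=
  \big[minn/maxrow A]_(i < m) rowsum A i.

Definition idPi m d : {ffun 'I_d -> {perm 'I_m}} := [ffun _ => 1%g].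

(* gamma(A) = min_Pi max_i sum_j A^Pi_{i,j}; seed is the value at Pi = id,
   which is itself in the range, so this is the true minimum. *)
Definition gamma m d (A : 'M[nat]_(m, d)) : nat :=
  \big[minn/maxrow (permcols A (idPi m d))]_(Pi : {ffun 'I_d -> {perm 'I_m}})
     maxrow (permcols A Pi).

Definition beta m d (A : 'M[nat]_(m, d)) : nat :=
  \max_(Pi : {ffun 'I_d -> {perm 'I_m}}) minrow (permcols A Pi).

(* (a, ..., a) with a = (1, ..., N)^T ; row i (0-based) has entry i+1 *)
Definition consec N d : 'M[nat]_(N, d) := \matrix_(i, j) (i.+1 : nat).

Definition complete_consecutive N d (A : 'M[nat]_(N, d)) : Prop :=
  exists Pi : {ffun 'I_d -> {perm 'I_N}}, A = permcols (consec N d) Pi.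

Definition a_d (d k : nat) : nat :=
  d + \sum_(i < d) \sum_(1 <= j < k.+1) i * d ^ (j - 1).

From mathcomp Require Import all_boot all_order all_algebra all_fingroup.
From mathcomp Require Import zify.
Set Implicit Arguments. Unset Strict Implicit. Unset Printing Implicit Defensive.

(* Write row indices i < d^k in base d and let column j carry the number
   obtained by adding j modulo d to every digit of i.  For fixed i, each digit
   position then runs through all residues 0, ..., d-1 as j varies, so the row
   sum is exactly d + (0 + ... + (d-1)) (1 + d + ... + d^(k-1)) = a_d(k), and
   for fixed j the map is a bijection of [0, d^k).  When d^k <= N the remaining
   rows keep their natural entries, which are even larger: this bounds beta
   from below.  When N <= d^k, replacing the shifted values of the N rows by
   their ranks among themselves only decreases entries: this bounds gamma from above.
   Finally beta <= gamma because min row sum <= average <= max row sum, and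
   the average does not depend on the column permutations. *)

Fixpoint digit_shift (d j k i : nat) : nat :=
  if k is k'.+1 then (i %% d + j) %% d + d * digit_shift d j k' (i %/ d) else 0.

Section DigitShift.
Variables (d j : nat).
Hypothesis d_gt0 : 0 < d.

Lemma digit_shift_lt k i : digit_shift d j k i < d ^ k.
Proof.
elim: k i => [|k IHk] i //=.
have := ltn_pmod (i %% d + j) d_gt0; have := IHk (i %/ d).
rewrite expnS; nia.
Qed.

Lemma digit_shift_inj k a b : a < d ^ k -> b < d ^ k ->
  digit_shift d j k a = digit_shift d j k b -> a = b.
Proof.
elim: k a b => [|k IHk] a b /=; first by rewrite expn0 !ltnS !leqn0 => /eqP-> /eqP->.
move=> lt_a lt_b; set ca := (a %% d + j) %% d; set cb := (b %% d + j) %% d => E.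
have Ec : ca = cb.
  have := congr1 (modn^~ d) E.
  by rewrite ![_ + d * _]addnC !(mulnC d) !modnMDl !modn_small ?ltn_pmod.
have Eq : a %/ d = b %/ d.
  apply: IHk; rewrite ?ltn_divLR // -?expnSr //.
  by move: E; rewrite Ec => /addnI/eqP; rewrite eqn_pmul2l // => /eqP.
have Em : a %% d = b %% d.
  by move/eqP: Ec; rewrite /ca /cb -!(addnC j) eqn_modDl !modn_mod => /eqP.
by rewrite (divn_eq a d) (divn_eq b d) Eq Em.
Qed.

End DigitShift.

Lemma sum_modDn d x : 0 < d -> \sum_(j < d) (x + j) %% d = \sum_(j < d) j.
Proof.
move=> d_gt0; pose h (j : 'I_d) : 'I_d := Ordinal (ltn_pmod (x + j) d_gt0).
have h_inj : injective h.
  by move=> a b /(congr1 val)/eqP /=; rewrite eqn_modDl !modn_small // => /eqP/val_inj.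
by rewrite [RHS](reindex_inj h_inj).
Qed.

Lemma sum_digit_shift d k i : 0 < d ->
  \sum_(j < d) digit_shift d j k i = (\sum_(x < d) x) * \sum_(p < k) d ^ p.
Proof.
move=> d_gt0; elim: k i => [|k IHk] i /=; first by rewrite big_ord0 muln0 big1.
rewrite big_split /= sum_modDn // -big_distrr /= IHk big_ord_recl /= expn0.
under [X in _ = _ * (_ + X)]eq_bigr do rewrite expnS.
by rewrite -big_distrr /= mulnDr muln1 mulnCA.
Qed.

Lemma a_dE d k : a_d d k = d + (\sum_(x < d) x) * \sum_(p < k) d ^ p.
Proof.
rewrite /a_d big_distrl /=; congr (_ + _); apply: eq_bigr => x _.
rewrite big_add1 /= big_mkord big_distrr /=.
by apply: eq_bigr => p _; rewrite subn1.
Qed.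

Lemma a_dS d k : a_d d k.+1 = a_d d k + \sum_(i < d) i * d ^ k.
Proof. by rewrite !a_dE big_ord_recr /= -big_distrl mulnDr addnA. Qed.

Lemma sum_succ n (F : 'I_n -> nat) : \sum_(j < n) (F j).+1 = n + \sum_(j < n) F j.
Proof.
under eq_bigr do rewrite -add1n.
by rewrite big_split /= sum_nat_const card_ord muln1.
Qed.

(* The permutation is the ranking of the values of f. *)
Lemma exists_perm_leq n (f : 'I_n -> nat) : injective f ->
  exists s : {perm 'I_n}, forall i, s i <= f i.
Proof.
move=> f_inj; pose below i := [set i' | f i' < f i].
have below_lt i : #|below i| < n.
  rewrite -[n in _ < n]card_ord; apply: proper_card; apply/properP.
  by split; [apply/subsetP | exists i; rewrite ?inE ?ltnn].
have below_le i : #|below i| <= f i.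
  rewrite cardE -(size_map f) -(size_iota 0 (f i)).
  apply: uniq_leq_size; first by rewrite map_inj_uniq // enum_uniq.
  by move=> v /mapP[i' Hi' ->]; rewrite mem_iota add0n; move: Hi'; rewrite mem_enum inE.
have below_mono a b : f a < f b -> #|below a| < #|below b|.
  move=> ab; apply: proper_card; apply/properP; split; last by exists a; rewrite !inE ?ltnn.
  by apply/subsetP => x; rewrite !inE => /ltn_trans; apply.
pose r i : 'I_n := Ordinal (below_lt i).
have r_inj : injective r.
  move=> a b /(congr1 val) /= E.
  case: (ltngtP (f a) (f b)) => [/below_mono|/below_mono|/f_inj //];
    by rewrite E ltnn.
by exists (perm r_inj) => i; rewrite permE; apply: below_le.
Qed.

Lemma exists_perm_eq n (f : 'I_n -> nat) : injective f -> (forall i, f i < n) ->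
  exists s : {perm 'I_n}, forall i, s i = f i :> nat.
Proof.
move=> f_inj f_lt; pose g i : 'I_n := Ordinal (f_lt i).
have g_inj : injective g by move=> a b /(congr1 val)/f_inj.
by exists (perm g_inj) => i; rewrite permE.
Qed.

Lemma bigmin_leq (I : finType) (F : I -> nat) x i : \big[minn/x]_j F j <= F i.
Proof.
have : i \in index_enum I by rewrite mem_index_enum.
rewrite unlock; elim: (index_enum I) => [|a r IHr] //=.
rewrite inE => /orP[/eqP->|/IHr]; first exact: geq_minl.
exact: leq_trans (geq_minr _ _).
Qed.

Section RowSums.
Variables (N d : nat).
Implicit Types (A : 'M[nat]_(N, d)) (P Q : {ffun 'I_d -> {perm 'I_N}}).

Lemma minrow_leq A i : minrow A <= rowsum A i.
Proof. exact: bigmin_leq. Qed.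

Lemma rowsum_leq_maxrow A i : rowsum A i <= maxrow A.
Proof. exact: leq_bigmax. Qed.

Lemma leq_minrow c A : 0 < N -> (forall i, c <= rowsum A i) -> c <= minrow A.
Proof.
move=> N_gt0 c_le; rewrite /minrow; elim/big_ind: _ => //.
- exact: leq_trans (c_le (Ordinal N_gt0)) (rowsum_leq_maxrow _ _).
- by move=> x y cx cy; rewrite leq_min cx cy.
Qed.

Lemma sum_rowsum_permcols A P :
  \sum_(i < N) rowsum (permcols A P) i = \sum_(i < N) rowsum A i.
Proof.
rewrite /rowsum exchange_big [RHS]exchange_big /=; apply: eq_bigr => j _.
rewrite (reindex_inj (@perm_inj _ (P j))) /=.
by apply: eq_bigr => i _; rewrite mxE -permM mulgV perm1.
Qed.

Lemma minrow_leq_maxrow A P Q : 0 < N ->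
  minrow (permcols A P) <= maxrow (permcols A Q).
Proof.
move=> N_gt0; rewrite -(leq_pmul2l N_gt0).
apply: (@leq_trans (\sum_(i < N) rowsum (permcols A P) i)).
  rewrite -[X in X * _]card_ord -sum_nat_const.
  by apply: leq_sum => i _; apply: minrow_leq.
rewrite sum_rowsum_permcols -(sum_rowsum_permcols A Q).
rewrite -[X in _ <= X * _]card_ord -sum_nat_const.
by apply: leq_sum => i _; apply: rowsum_leq_maxrow.
Qed.

Lemma beta_leq_gamma A : 0 < N -> beta A <= gamma A.
Proof.
move=> N_gt0; apply/bigmax_leqP => P _; rewrite /gamma.
elim/big_ind: _ => [|x y le_x le_y|Q _]; last exact: minrow_leq_maxrow.
- exact: minrow_leq_maxrow.
- by rewrite leq_min le_x le_y.
Qed.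

Lemma complete_consecutive_rowsum A (s : 'I_d -> {perm 'I_N}) :
  complete_consecutive A ->
  exists P, forall i, rowsum (permcols A P) i = \sum_(j < d) (s j i).+1.
Proof.
case=> P0 ->; exists [ffun j => ((P0 j)^-1 * (s j)^-1)%g] => i.
by apply: eq_bigr => j _; rewrite !mxE ffunE invMg !invgK permM permK.
Qed.

Lemma a_d_leq_beta k A : 0 < d -> d ^ k <= N -> complete_consecutive A ->
  a_d d k <= beta A.
Proof.
move=> d_gt0 dk_le_N hA.
pose f j (i : 'I_N) := if i < d ^ k then digit_shift d j k i else i.
have f_lt j i : f j i < N.
  by rewrite /f; case: ifP => // _; apply: leq_trans (digit_shift_lt _ _ _ _) dk_le_N.
have f_inj j : injective (f j).
  move=> a b; rewrite /f; case: ifP => lt_a; case: ifP => lt_b.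
  - by move/(digit_shift_inj d_gt0 lt_a lt_b)/val_inj.
  - by move=> E; move: lt_b; rewrite -E digit_shift_lt.
  - by move=> E; move: lt_a; rewrite E digit_shift_lt.
  - exact: val_inj.
have [s sE] := fin_all_exists (fun j : 'I_d => exists_perm_eq (f_inj j) (f_lt j)).
have [P PE] := complete_consecutive_rowsum s hA.
apply: leq_trans (leq_bigmax P); apply: leq_minrow => [|i].
  by apply: leq_trans dk_le_N; rewrite expn_gt0 d_gt0.
rewrite PE; under eq_bigr do rewrite sE.
rewrite a_dE -(sum_digit_shift k i d_gt0) -sum_succ.
apply: leq_sum => j _; rewrite /f; case: ifP => // /negbT; rewrite -leqNgt => le_i.
by rewrite ltnS (leq_trans _ le_i) // ltnW ?digit_shift_lt.
Qed.

Lemma gamma_leq_a_d k A : 0 < d -> N <= d ^ k -> complete_consecutive A ->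
  gamma A <= a_d d k.
Proof.
move=> d_gt0 N_le_dk hA.
have f_inj j : injective (fun i : 'I_N => digit_shift d j k i).
  move=> a b /digit_shift_inj E; apply/val_inj/E => //;
    exact: leq_trans (ltn_ord _) N_le_dk.
have [s sE] := fin_all_exists (fun j : 'I_d => exists_perm_leq (f_inj j)).
have [P PE] := complete_consecutive_rowsum s hA.
apply: leq_trans (bigmin_leq _ _ P) _; apply/bigmax_leqP => i _.
rewrite PE a_dE -(sum_digit_shift k i d_gt0) -sum_succ.
by apply: leq_sum => j _; rewrite ltnS.
Qed.

End RowSums.

Lemma a_d_subn_leq d t u : t <= u <= t.+1 ->
  a_d d u - a_d d t <= \sum_(i < d) i * d ^ (u - 1).
Proof.
case/andP=> le_tu le_ut; have [->|ne] := eqVneq u t; first by rewrite subnn.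
have -> : u = t.+1 by apply/eqP; rewrite eqn_leq le_ut ltn_neqAle eq_sym ne.
by rewrite a_dS subn1 addKn.
Qed.

Theorem corollary1 (d N : nat) (hd : 2 <= d) (hN : 1 <= N)
    (A : 'M[nat]_(N, d)) (hA : complete_consecutive A) :
  [/\ a_d d (trunc_log d N) <= beta A,
      beta A <= gamma A,
      gamma A <= a_d d (up_log d N)
    & a_d d (up_log d N) - a_d d (trunc_log d N)
        <= \sum_(i < d) i * d ^ (up_log d N - 1)].
Proof.
have d_gt0 : 0 < d by apply: ltnW.
have trunc_le := trunc_logP hd hN; have up_ge := up_logP N hd.
split.
- exact: a_d_leq_beta.
- exact: beta_leq_gamma.
- exact: gamma_leq_a_d.
- apply: a_d_subn_leq; apply/andP; split.
    by rewrite -(leq_exp2l _ _ hd); apply: leq_trans trunc_le up_ge.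
  by apply: up_log_min => //; apply: ltnW (trunc_log_ltn _ hd).
Qed.
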